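(* Let $(D,v^* )$ be a neighbor-acyclic instance of TFP (so $|V(D)|$ is a power of two) such that $D$ has no source. Let $A=N_{\mathrm{out}}(v^* )$ and $B=N_{\mathrm{in}}(v^* )$. If (1) $|A|\ge |V(D)|/3$ and (2) for every $b\in B$, $\mathrm{out}(b)\le \frac{|B|}{|A|}\,\mathrm{out}(v^* )$ (equivalently $\mathrm{out}(b)\le |B|$), then $(D,v^* )$ is a yes-instance.
   Context: A tournament is a digraph with exactly one arc between every pair of distinct vertices; $(u,v)$ means $u$ beats $v$. TFP: given a tournament $D$ with $|V(D)|$ a power of two and a player $v^*$, decide whether there is a seeding of a balanced knockout tournament (complete binary tree with $|V(D)|$ leaves, in each round sibling winners play and the winner according to $D$ advances) under which $v^*$ is the champion; if so the instance is a yes-instance. $\mathrm{out}(v)=|N_{\mathrm{out}}(v)|$ is the out-degree in $D$. An instance $(D,v^* )$ is neighbor-acyclic if $D[N_{\mathrm{in}}(v^* )]$ and $D[N_{\mathrm{out}}(v^* )]$ are both acyclic. A source is a vertex of in-degree $0$. *)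

From mathcomp Require Import all_boot.
Set Implicit Arguments. Unset Strict Implicit. Unset Printing Implicit Defensive.

Section Tournament.
Variable T : finType.
Variable beats : rel T.   (* beats u v  <->  arc (u,v): u beats v *)

Definition tournament : Prop :=
  (forall u, ~~ beats u u) /\
  (forall u v, u != v -> beats u v (+) beats v u).

Definition match_winner (a b : T) : T := if beats a b then a else b.

Fixpoint knockout_round (s : seq T) : seq T :=
  match s with
  | a :: b :: r => match_winner a b :: knockout_round r
  | _ => s
  end.

(* A seeding is an ordering s of all players (the leaves of the complete
   binary tree, left to right); after k rounds (|V| = 2^k) one champion
   remains. *)
Definition is_seeding (s : seq T) : Prop := perm_eq s (enum T).

Definition champion_under (k : nat) (s : seq T) (v : T) : Prop :=
  iter k knockout_round s = [:: v].

Definition yes_instance (k : nat) (v : T) : Prop :=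
  exists s : seq T, is_seeding s /\ champion_under k s v.

Definition out_nbhd (v : T) : {set T} := [set u | beats v u].
Definition in_nbhd (v : T) : {set T} := [set u | beats u v].
Definition outdeg (v : T) : nat := #|out_nbhd v|.

Definition acyclic_on (A : {set T}) : Prop :=
  forall (x : T) (p : seq T), x \in A -> all (fun y => y \in A) p ->
    ~~ cycle beats (x :: p).

Definition neighbor_acyclic (v : T) : Prop :=
  acyclic_on (in_nbhd v) /\ acyclic_on (out_nbhd v).

Definition is_source (v : T) : Prop := forall u, ~~ beats u v.

End Tournament.

From mathcomp Require Import all_boot zify.
Set Implicit Arguments. Unset Strict Implicit. Unset Printing Implicit Defensive.

(* Since D[B] is acyclic it is a transitive tournament, so B is ranked linearly.
   Call a field W of 2^(k+1) players containing v* good if it satisfies (1) and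
   the weak form |W∩A∩out(b)| <= |W∩B∩in(b)| of (2) inside W.  One round takes a
   good field to a good field of half the size: with p = |W∩A|, m = |W∩B| and
   t = m - p (so t < p by (1)), the top t players of the ranking of W∩B beat the
   bottom t; the middle m - 2t are matched greedily, from the bottom up, with
   players of A beating them, Hall's condition being exactly the weak form of (2);
   v* beats one remaining player of A and the other players of A, an even number,
   play each other.  Only the top t players of B survive, and they are closed
   upwards in the ranking, so the weak form of (2) persists, while (1) persists
   because the survivors from A number 2^k - 1 - t. *)

Lemma perm_map_lift (U V : eqType) (f : U -> V) (xs : seq U) (s : seq V) :
  perm_eq s (map f xs) -> exists2 xs', perm_eq xs' xs & map f xs' = s.
Proof.
case: xs => [/perm_nilP ->|x0 xs]; first by exists [::].
case/(perm_iotaP (f x0)) => Is pIs ->; exists (map (nth x0 (x0 :: xs)) Is).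
  by apply/(perm_iotaP x0); exists Is; rewrite // size_map in pIs.
rewrite -map_comp; apply/eq_in_map => i; rewrite (perm_mem pIs) mem_iota size_map.
by move=> lti; rewrite (nth_map x0).
Qed.

Lemma disjoint_notin (T : finType) (A B : {set T}) :
  {in A, forall x, x \notin B} -> [disjoint A & B].
Proof. by move=> AB; rewrite disjoints_subset; apply/subsetP => x /AB; rewrite inE. Qed.

(** * Tournaments and rankings *)

Section Tournament.
Variables (T : finType) (beats : rel T).
Hypothesis tourn : tournament beats.

Lemma beats_irr u : ~~ beats u u.
Proof. by case: tourn. Qed.

Lemma beats_neq u w : beats u w -> u != w.
Proof. by apply: contraTneq => ->; exact: beats_irr. Qed.

Lemma beats_asym u w : beats u w -> ~~ beats w u.
Proof. by move=> uw; have := proj2 tourn u w (beats_neq uw); rewrite uw. Qed.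

Lemma beats_total u w : u != w -> ~~ beats u w -> beats w u.
Proof. by move=> /(proj2 tourn u w); case: (beats u w). Qed.

Lemma setD1_nbhd u (X : {set T}) :
  X :\ u = X :&: in_nbhd beats u :|: X :&: out_nbhd beats u.
Proof.
apply/setP => x; rewrite !inE; case: (eqVneq x u) => [->|xu] /=.
  by rewrite (negbTE (beats_irr u)) !andbF.
by case: (boolP (beats x u)) => [_|/(beats_total xu) ->]; case: (x \in X).
Qed.

Lemma card_nbhd_split u (X : {set T}) :
  #|X| = (u \in X) + #|X :&: in_nbhd beats u| + #|X :&: out_nbhd beats u|.
Proof.
suff IO0 : X :&: in_nbhd beats u :&: (X :&: out_nbhd beats u) = set0.
  by rewrite (cardsD1 u X) setD1_nbhd cardsU IO0 cards0 subn0 addnA.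
apply/setP => x; rewrite !inE.
by case: (boolP (beats x u)) => [/beats_asym/negbTE ->|]; rewrite !andbF.
Qed.

Lemma out_le_in_of_outdeg u b : b \in in_nbhd beats u -> outdeg beats b <= #|in_nbhd beats u| ->
  #|out_nbhd beats u :&: out_nbhd beats b| <= #|in_nbhd beats u :&: in_nbhd beats b|.
Proof.
move=> bu; have ub : u \in out_nbhd beats b by move: bu; rewrite !inE.
have := card_nbhd_split b (in_nbhd beats u); rewrite bu.
have := card_nbhd_split u (out_nbhd beats b); rewrite ub.
by rewrite /outdeg ![out_nbhd beats b :&: _]setIC; lia.
Qed.

Lemma acyclic_on_trans (X : {set T}) : acyclic_on beats X -> {in X & &, transitive beats}.
Proof.
move=> acX y x z yX xX zX xy yz; case: (eqVneq x z) => [exz|xz].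
  by move: (beats_asym yz); rewrite -exz xy.
have := acX x [:: y; z] xX; rewrite /= yX zX xy yz /= andbT => /(_ isT).
by rewrite eq_sym in xz; exact: beats_total xz.
Qed.

Lemma pairwise_beats_uniq s : pairwise beats s -> uniq s.
Proof. by rewrite uniq_pairwise; apply: sub_pairwise => x y /beats_neq. Qed.

Lemma exists_ranking (X : {set T}) :
  {in X & &, transitive beats} -> exists2 s : seq T, s =i X & pairwise beats s.
Proof.
move=> trX; pose le x y := (x == y) || beats x y.
have le_total : total le.
  move=> x y; rewrite /le; have [->|xy] := eqVneq x y; rewrite ?eqxx //=.
  by case: (boolP (beats x y)) => //= /(beats_total xy).
have le_trans : {in X & &, transitive le}.
  move=> y x z yX xX zX /predU1P [-> //|xy] /predU1P [<-|yz]; rewrite /le ?xy ?orbT //.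
  by rewrite (trX y x z) ?orbT.
exists (sort le (enum X)) => [x|]; first by rewrite mem_sort mem_enum.
have := sort_sorted le_total (enum X).
rewrite (sorted_pairwise_in le_trans); last by apply/allP => x; rewrite mem_sort mem_enum.
have := enum_uniq X; rewrite -(sort_uniq le) uniq_pairwise => uX sX.
have := introT andP (conj sX uX); rewrite -pairwise_relI.
by apply: sub_pairwise => x y /andP [/predU1P [->|//]] => /negP.
Qed.

Lemma ranked_prefix s1 s2 x y : pairwise beats (s1 ++ s2) ->
  x \in s1 -> y \in s1 ++ s2 -> beats y x -> y \in s1.
Proof.
rewrite pairwise_cat mem_cat => /and3P [/allrelP s12 _ _] xs1 /orP [//|ys2] /beats_asym.
by rewrite s12.
Qed.

Lemma ranked_beats s x y : pairwise beats s -> x \in s -> y \in s ->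
  beats y x = (index y s < index x s).
Proof.
move=> bs xs ys; have /pairwiseP bnth := bs; have := bnth x (index y s) (index x s).
rewrite !inE !index_mem !nth_index // => /(_ ys xs) yx.
case: ltngtP => [/yx //|xy|/(congr1 (nth x s))]; last first.
  by rewrite !nth_index // => ->; exact/negbTE/beats_irr.
apply/negbTE/beats_asym; have := bnth x (index x s) (index y s).
by rewrite !inE !index_mem !nth_index //; apply.
Qed.

Lemma card_ranked_in (X : {set T}) s x : s =i X -> pairwise beats s -> x \in X ->
  #|X :&: in_nbhd beats x| = index x s.
Proof.
move=> sX bs; rewrite -sX => xs; have us := pairwise_beats_uniq bs.
have le_xs : index x s <= size s by rewrite ltnW // index_mem.
rewrite -[RHS](size_takel le_xs) -(card_uniqP (take_uniq _ us)).
apply: eq_card => y; rewrite !inE -sX; case: (boolP (y \in s)) => ys /=.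
  by rewrite in_take // (ranked_beats bs).
by apply/esym/negbTE; apply: contra ys; exact: mem_take.
Qed.

(** * Knockout rounds *)

Definition players (ps : seq (T * T)) : seq T := flatten [seq [:: p.1; p.2] | p <- ps].

(* ps lists the matches as (winner, loser) pairs in bracket order. *)
Definition knockout_step (W W' : {set T}) : Prop :=
  exists ps : seq (T * T), [/\ all (fun p => beats p.1 p.2) ps,
    perm_eq (players ps) (enum W) & unzip1 ps =i W'].

Lemma players_cat ps1 ps2 : players (ps1 ++ ps2) = players ps1 ++ players ps2.
Proof. by rewrite /players map_cat flatten_cat. Qed.

Lemma players_cons p ps : players (p :: ps) = p.1 :: p.2 :: players ps.
Proof. by []. Qed.

Lemma unzip1_sub_players ps : {subset unzip1 ps <= players ps}.
Proof.
elim: ps => //= p ps IH x; rewrite players_cons !inE.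
by case/predU1P => [->|/IH ->]; rewrite ?eqxx ?orbT.
Qed.

Lemma uniq_players_unzip1 ps : uniq (players ps) -> uniq (unzip1 ps).
Proof.
elim: ps => // p ps IH; rewrite players_cons !cons_uniq in_cons negb_or.
case/and3P => /andP [_ p1] _ /IH u1; rewrite /= u1 andbT.
by apply: contra p1 => /unzip1_sub_players.
Qed.

Lemma knockout_round_players ps :
  all (fun p => beats p.1 p.2) ps -> knockout_round beats (players ps) = unzip1 ps.
Proof.
by elim: ps => // p ps IH /andP [pw /IH kps]; rewrite players_cons /= /match_winner pw kps.
Qed.

Lemma knockout_step_seed W W' s' : knockout_step W W' -> perm_eq s' (enum W') ->
  exists2 s, perm_eq s (enum W) & knockout_round beats s = s'.
Proof.
case=> ps [wins pW eW'] pW'.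
have u1 : uniq (unzip1 ps) by apply: uniq_players_unzip1; rewrite (perm_uniq pW) enum_uniq.
have /perm_map_lift [qs pq <-] : perm_eq s' (unzip1 ps).
  apply: uniq_perm => [||x]; rewrite ?(perm_uniq pW') ?enum_uniq //.
  by rewrite (perm_mem pW') mem_enum eW'.
exists (players qs); first by apply: perm_trans pW; apply/perm_flatten/perm_map.
by apply: knockout_round_players; rewrite (perm_all _ pq).
Qed.

Lemma knockout_step_card W W' : knockout_step W W' -> #|W| = 2 * #|W'|.
Proof.
case=> ps [_ pW eW']; have u1 := uniq_players_unzip1 (etrans (perm_uniq pW) (enum_uniq W)).
rewrite -(eq_card eW') (card_uniqP u1) size_map cardE -(perm_size pW) /players.
by elim: ps {pW eW' u1} => //= p ps ->; rewrite mulnS.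
Qed.

Lemma knockout_step_sub W W' : knockout_step W W' -> W' \subset W.
Proof.
case=> ps [_ pW eW']; apply/subsetP => x.
by rewrite -eW' => /unzip1_sub_players; rewrite (perm_mem pW) mem_enum.
Qed.

Lemma knockout_step0 : knockout_step set0 set0.
Proof. by exists [::]; split; rewrite ?enum_set0 // => x; rewrite inE. Qed.

Lemma knockout_step_match a b : beats a b -> knockout_step [set a; b] [set a].
Proof.
move=> ab; exists [:: (a, b)]; split => [||x]; rewrite /= ?ab ?inE //.
apply: uniq_perm => [||x]; rewrite ?enum_uniq ?mem_enum ?inE //=.
by rewrite inE andbT; exact: beats_neq.
Qed.

Lemma knockout_stepU (W1 W2 W1' W2' : {set T}) : [disjoint W1 & W2] ->
  knockout_step W1 W1' -> knockout_step W2 W2' -> knockout_step (W1 :|: W2) (W1' :|: W2').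
Proof.
move=> dW [ps1 [w1 p1 e1]] [ps2 [w2 p2 e2]]; exists (ps1 ++ ps2); split => [||x].
- by rewrite all_cat w1 w2.
- rewrite players_cat; apply: uniq_perm => [||x]; rewrite ?enum_uniq //.
    rewrite cat_uniq (perm_uniq p1) (perm_uniq p2) !enum_uniq andbT /=.
    by apply/hasPn => x; rewrite (perm_mem p1) (perm_mem p2) !mem_enum => /(disjointFl dW) ->.
  by rewrite mem_cat (perm_mem p1) (perm_mem p2) !mem_enum inE.
- by rewrite /unzip1 map_cat mem_cat e1 e2 inE.
Qed.

Lemma knockout_stepUD (R C C' R' : {set T}) : C \subset R ->
  knockout_step C C' -> knockout_step (R :\: C) R' -> knockout_step R (C' :|: R').
Proof.
move=> CR stC stR; rewrite -(setID R C) (setIidPr CR).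
apply: knockout_stepU stC stR; rewrite disjoint_sym.
by apply/setDidPl; rewrite setDDl setUid.
Qed.

Lemma knockout_step_even n (R : {set T}) : #|R| = 2 * n -> exists R', knockout_step R R'.
Proof.
elim: n R => [|n IH] R cR.
  by exists set0; move/eqP: cR; rewrite cards_eq0 => /eqP ->; exact: knockout_step0.
have /card_gt0P [x xR] : 0 < #|R| by rewrite cR mulnS.
have /card_gt0P [y /setD1P [yx yR]] : 0 < #|R :\ x| by move: cR; rewrite (cardsD1 x) xR; lia.
have sxy : [set x; y] \subset R by rewrite subUset !sub1set xR yR.
have [R' stR'] : exists R', knockout_step (R :\: [set x; y]) R'.
  by apply: (IH); rewrite cardsDS // cards2 eq_sym yx cR; lia.
have [w stxy] : exists w, knockout_step [set x; y] [set w].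
  have xy : x != y by rewrite eq_sym.
  have [bxy|/(beats_total xy) byx] := boolP (beats x y).
    by exists x; exact: knockout_step_match.
  by exists y; rewrite setUC; exact: knockout_step_match.
exists ([set w] :|: R'); exact: knockout_stepUD sxy stxy stR'.
Qed.

Lemma knockout_step_winner v n (R : {set T}) : v \notin R -> {in R, forall a, beats v a} ->
  #|R| = (2 * n).+1 -> exists R', knockout_step (v |: R) (v |: R').
Proof.
move=> vR vwins cR; have /card_gt0P [a aR] : 0 < #|R| by rewrite cR.
have va : v != a by apply: contraNneq vR => ->.
have [R' stR'] : exists R', knockout_step ((v |: R) :\: [set v; a]) R'.
  apply: (knockout_step_even (n := n)); rewrite cardsDS ?cards2 ?cardsU1; last first.
    by rewrite subUset !sub1set !inE eqxx aR orbT.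
  by rewrite vR cR va; lia.
exists R'; apply: knockout_stepUD (knockout_step_match (vwins a aR)) stR'.
by rewrite subUset !sub1set !inE eqxx aR orbT.
Qed.

(* Hall's condition for matching xs greedily from right to left. *)
Lemma knockout_step_greedy (Y : {set T}) (xs : seq T) : uniq xs -> {in xs, forall x, x \notin Y} ->
  {in xs, forall x, size xs - index x xs <= #|Y :&: in_nbhd beats x|} ->
  exists Z : {set T}, [/\ Z \subset Y, #|Z| = size xs & knockout_step ([set:: xs] :|: Z) Z].
Proof.
elim: xs => [|x xs IH] /=.
  by exists set0; rewrite sub0set cards0 set_nil setU0; split=> //; exact: knockout_step0.
move=> /andP [xxs uxs] xsY hx.
have [y' yxs|y' yxs|Z0 [sZ0 cZ0 st0]] := IH uxs.
- by apply: xsY; rewrite inE yxs orbT.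
- have xy' : x != y' by apply: contraNneq xxs => ->.
  by have := hx y'; rewrite inE yxs orbT /= (negbTE xy') subSS => /(_ isT).
have /subsetPn [y] : ~~ (Y :&: in_nbhd beats x \subset Z0).
  by apply: contraTN (hx x (mem_head x xs)) => /subset_leq_card; rewrite cZ0 /= eqxx; lia.
rewrite !inE => /andP [yY yx] yZ0.
exists (y |: Z0); split; first by rewrite subUset sub1set yY.
  by rewrite cardsU1 yZ0 cZ0.
rewrite set_cons setUACA (setUC [set x]); apply: knockout_stepU (knockout_step_match yx) st0.
apply: disjoint_notin => z; rewrite !inE negb_or => /orP [] /eqP ->.
  by rewrite yZ0 andbT; apply: contraL yY => yxs; apply: xsY; rewrite inE yxs orbT.
rewrite xxs; apply: contraNN (xsY x (mem_head x xs)); exact: (subsetP sZ0).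
Qed.
End Tournament.

(** * Halving a good field *)

Section Champion.
Variables (T : finType) (beats : rel T) (v : T).
Hypothesis tourn : tournament beats.
Local Notation A := (out_nbhd beats v).
Local Notation B := (in_nbhd beats v).
Hypothesis B_trans : {in B & &, transitive beats}.

Lemma notin_out_nbhd : v \notin A. Proof. by rewrite inE (beats_irr tourn). Qed.
Lemma notin_in_nbhd : v \notin B. Proof. by rewrite inE (beats_irr tourn). Qed.
Lemma in_nbhd_notin_out x : x \in B -> x \notin A.
Proof. by rewrite !inE; exact: beats_asym. Qed.

(* (1) is waived for the final field [set v], where it fails. *)
Definition good_field k (W : {set T}) := [/\ v \in W, #|W| = 2 ^ k,
  k = 0 \/ #|W| <= 3 * #|W :&: A| &
  {in W :&: B, forall b, #|W :&: A :&: out_nbhd beats b| <= #|W :&: B :&: in_nbhd beats b|}].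

Section Round.
Variables (k : nat) (W : {set T}).
Hypothesis goodW : good_field k.+1 W.
Local Notation WA := (W :&: A).
Local Notation WB := (W :&: B).
Local Notation p := #|WA|.
Local Notation m := #|WB|.

Lemma card_field : #|W| = p + m + 1.
Proof.
by case: goodW => vW _ _ _; rewrite (card_nbhd_split tourn v W) vW add1n addSn addnC addn1.
Qed.

Lemma field_in_lt_double_out : m < 2 * p.
Proof. by case: goodW => _ _ [//|]; rewrite card_field => + _; lia. Qed.

Section Ranked.
Variables s1 s2 s3 : seq T.
Hypotheses (size_s1 : size s1 = m - p) (size_s3 : size s3 = m - p).
Hypotheses (s_WB : s1 ++ s2 ++ s3 =i WB) (s_rank : pairwise beats (s1 ++ s2 ++ s3)).

Lemma s_uniq : uniq (s1 ++ s2 ++ s3).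
Proof. by have := pairwise_beats_uniq tourn s_rank. Qed.

Lemma size_s2 : size s2 = m - 2 * (m - p).
Proof.
have /card_uniqP := s_uniq.
by rewrite (eq_card s_WB) !size_cat size_s1 size_s3; lia.
Qed.

Lemma s_in_WB x : x \in s1 ++ s2 ++ s3 -> x \in WB.
Proof. by rewrite s_WB. Qed.

Lemma s_notin_WA x : x \in s1 ++ s2 ++ s3 -> x \notin WA.
Proof. by move/s_in_WB; rewrite !inE => /andP [_ /(beats_asym tourn)/negbTE ->]; rewrite andbF. Qed.

Lemma card_set_s1 : #|[set:: s1]| = m - p.
Proof.
have := s_uniq; rewrite cat_uniq => /and3P [u1 _ _].
by rewrite -size_s1 -(card_uniqP u1); apply: eq_card => x; rewrite inE.
Qed.

Lemma top_bottom_step : knockout_step beats ([set:: s3] :|: [set:: s1]) [set:: s1].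
Proof.
have := s_uniq; rewrite !cat_uniq => /and3P [u1 _ /and3P [_ _ u3]].
have beats13 y x : y \in s1 -> x \in s3 -> beats y x.
  move: s_rank; rewrite pairwise_cat => /and3P [/allrelP s123 _ _] ys1 xs3.
  by apply: s123; rewrite // mem_cat xs3 orbT.
have [x xs3|x xs3|Z [sZ cZ]] := knockout_step_greedy tourn (Y := [set:: s1]) u3.
- by rewrite inE; apply: contraL xs3 => /beats13 b; apply/negP => /b; exact/negP/beats_irr.
- rewrite (setIidPl _); last by apply/subsetP => y; rewrite !inE => /beats13; exact.
  by rewrite card_set_s1 -size_s3 leq_subr.
suff -> : Z = [set:: s1] by [].
by apply/eqP; rewrite eqEcard sZ cZ card_set_s1 size_s3 /=.
Qed.

Lemma middle_step :
  exists Z : {set T}, [/\ Z \subset WA, #|Z| = size s2 & knockout_step beats ([set:: s2] :|: Z) Z].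
Proof.
have := s_uniq; rewrite !cat_uniq => /and3P [_ /hasPn s12 /and3P [u2 _ _]].
apply: knockout_step_greedy => // x xs2; have xs : x \in s1 ++ s2 ++ s3 by rewrite !mem_cat xs2 orbT.
  exact: s_notin_WA.
have xWB := s_in_WB xs; case: goodW => _ _ _ /(_ x xWB).
rewrite (card_ranked_in tourn s_WB s_rank xWB) index_cat (negbTE (s12 x _)) ?mem_cat ?xs2 //.
rewrite index_cat xs2; have := card_nbhd_split tourn x WA; rewrite (negbTE (s_notin_WA xs)).
have := field_in_lt_double_out; have := index_mem x s2; rewrite xs2 size_s2 size_s1; lia.
Qed.

Lemma winners_good (W' : {set T}) : knockout_step beats W W' -> v \in W' ->
  [set:: s1] \subset W' -> W' :&: B \subset [set:: s1] -> good_field k W'.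
Proof.
move=> st vW' s1W' W'B; have cW := card_field; have cWW := knockout_step_card st.
case: goodW => _ cW2 _ cond.
have cW' : #|W'| = 2 ^ k.
  by apply/eqP; rewrite -(eqn_pmul2l (isT : 0 < 2)) -expnS -cW2 cWW.
split => //; first have [->|k_gt0] := posnP k; [by left | right|].
  have : 2 <= 2 ^ k by rewrite -{1}(expn1 2) leq_exp2l.
  have := subset_leq_card W'B; rewrite card_set_s1.
  have := field_in_lt_double_out; have := card_nbhd_split tourn v W'; rewrite vW' add1n; lia.
move=> b; rewrite inE => /andP [bW' bB].
have bs1 : b \in s1 by rewrite -[b \in s1]inE; apply: (subsetP W'B); rewrite inE bW'.
have bWB : b \in WB by apply: s_in_WB; rewrite mem_cat bs1.
apply: leq_trans (leq_trans (cond b bWB) _).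
  by apply/subset_leq_card/setSI/setSI; exact: knockout_step_sub st.
apply/subset_leq_card/subsetP => y; rewrite !inE => /andP [/andP [yW yB] yb]; rewrite yB yb !andbT.
apply: (subsetP s1W'); rewrite inE; apply: (ranked_prefix tourn s_rank bs1) => //.
by rewrite s_WB !inE yW.
Qed.

Lemma in_side_step (Z : {set T}) : Z \subset WA ->
  knockout_step beats ([set:: s2] :|: Z) Z -> knockout_step beats (WB :|: Z) ([set:: s1] :|: Z).
Proof.
move=> ZWA stZ; have := s_uniq; rewrite !cat_uniq => /and3P [_ /hasPn s1_23 /and3P [_ /hasPn s2_3 _]].
have -> : WB = [set:: s3] :|: [set:: s1] :|: [set:: s2].
  apply/setP => x; rewrite -[x \in WB]s_WB !inE !mem_cat.
  by do ![case: (_ \in _)].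
rewrite -setUA; apply: knockout_stepU top_bottom_step stZ.
apply: disjoint_notin => x; rewrite !inE => xs31.
have xs : x \in s1 ++ s2 ++ s3 by rewrite !mem_cat; case/orP: xs31 => ->; rewrite ?orbT.
rewrite negb_or; apply/andP; split.
  case/orP: xs31 => [/s2_3 //|xs1]; apply: contraL xs1 => xs2.
  by apply: s1_23; rewrite mem_cat xs2.
by apply: contraNN (s_notin_WA xs); exact: (subsetP ZWA).
Qed.

Lemma field_decomp (Z : {set T}) : Z \subset WA -> W = WB :|: Z :|: (v |: (WA :\: Z)).
Proof.
case: goodW => vW _ _ _ ZWA.
have WAZ : Z :|: WA :\: Z = WA by rewrite -{1}(setIidPr ZWA) setID.
by rewrite setUCA -setUA WAZ -(setD1_nbhd tourn) setD1K.
Qed.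

Lemma sides_disjoint (Z : {set T}) : Z \subset WA -> [disjoint WB :|: Z & v |: (WA :\: Z)].
Proof.
move=> ZWA; apply: disjoint_notin => x; rewrite in_setU1 in_setD negb_or negb_and negbK.
case/setUP => [/setIP [_ xB]|xZ].
  have xA := in_nbhd_notin_out xB; rewrite in_setI (negbTE xA) andbF orbT andbT.
  by apply: contraTneq xB => ->; exact: notin_in_nbhd.
have /setIP [_ xA] := subsetP ZWA x xZ; rewrite xZ andbT.
by apply: contraTneq xA => ->; exact: notin_out_nbhd.
Qed.

Lemma card_out_rest_odd (Z : {set T}) : Z \subset WA -> #|Z| = size s2 ->
  exists n, #|WA :\: Z| = (2 * n).+1.
Proof.
move=> ZWA cZ; exists ((p - size s2) %/ 2); rewrite cardsDS // cZ size_s2.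
have := card_field; have := field_in_lt_double_out; case: goodW => _ -> _ _; rewrite expnS; lia.
Qed.

Lemma ranked_round : exists W', knockout_step beats W W' /\ good_field k W'.
Proof.
have [Z [ZWA cZ stZ]] := middle_step; have [n cR] := card_out_rest_odd ZWA cZ.
have vR : v \notin WA :\: Z by rewrite !inE (negbTE (beats_irr tourn v)) !andbF.
have vwins : {in WA :\: Z, forall a, beats v a} by move=> a; rewrite !inE => /and3P [].
have [Q stQ] := knockout_step_winner tourn vR vwins cR.
have ZQ_A : Z :|: (v |: Q) \subset v |: A.
  rewrite subUset (subset_trans ZWA (subset_trans (subsetIr _ _) (subsetU1 _ _))) /=.
  apply: subset_trans (knockout_step_sub stQ) (setUS _ _).
  exact: subset_trans (subsetDl _ _) (subsetIr _ _).
have st : knockout_step beats W ([set:: s1] :|: Z :|: (v |: Q)).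
  rewrite {1}(field_decomp ZWA).
  exact: knockout_stepU (sides_disjoint ZWA) (in_side_step ZWA stZ) stQ.
exists ([set:: s1] :|: Z :|: (v |: Q)); split => //.
apply: (winners_good st); rewrite ?inE ?eqxx ?orbT //.
- by rewrite -setUA subsetUl.
apply/subsetP => x; rewrite in_setI -setUA in_setU => /andP [/orP [//|/(subsetP ZQ_A) xvA] xB].
move: xvA; rewrite in_setU1 => /orP [/eqP xv|xA]; last by have := in_nbhd_notin_out xB; rewrite xA.
by move: xB; rewrite xv (negbTE notin_in_nbhd).
Qed.

End Ranked.

Lemma field_round : exists W', knockout_step beats W W' /\ good_field k W'.
Proof.
have WB_trans : {in WB & &, transitive beats}.
  by move=> y x z /setIP [_ yB] /setIP [_ xB] /setIP [_ zB]; exact: B_trans.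
have [s sWB srank] := exists_ranking tourn WB_trans.
have size_s : size s = m.
  by rewrite -(card_uniqP (pairwise_beats_uniq tourn srank)); exact: eq_card.
have lt_mp := field_in_lt_double_out.
pose t := m - p; pose s1 := take t s; pose s23 := drop t s.
apply: (@ranked_round s1 (take (m - 2 * t) s23) (drop (m - 2 * t) s23)).
- by rewrite size_takel // size_s; lia.
- by rewrite size_drop size_drop size_s; lia.
- by rewrite !cat_take_drop.
- by rewrite !cat_take_drop.
Qed.

End Round.

Lemma good_field_champion k W : good_field k W ->
  exists2 s, perm_eq s (enum W) & iter k (knockout_round beats) s = [:: v].
Proof.
elim: k W => [|k IH] W goodW.
  case: goodW => vW cW _ _; exists [:: v] => //.
  suff -> : W = [set v] by rewrite enum_set1.
  by apply/eqP; rewrite eq_sym eqEcard sub1set vW cards1 cW.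
have [W' [st goodW']] := field_round goodW.
have [s' ps' ks'] := IH W' goodW'.
have [s ps ks] := knockout_step_seed st ps'.
by exists s; rewrite // iterSr ks.
Qed.

End Champion.

Theorem theorem5 (T : finType) (beats : rel T) (k : nat) (vstar : T) :
  tournament beats ->
  #|T| = 2 ^ k ->
  neighbor_acyclic beats vstar ->
  (forall u : T, ~ is_source beats u) ->
  (* (1) |A| >= |V(D)|/3 *)
  #|T| <= 3 * #|out_nbhd beats vstar| ->
  (* (2) out b <= (|B|/|A|) out vstar, cleared of the denominator |A| *)
  (forall b, b \in in_nbhd beats vstar ->
     outdeg beats b * #|out_nbhd beats vstar|
       <= #|in_nbhd beats vstar| * outdeg beats vstar) ->
  yes_instance beats k vstar.
Proof.
move=> tourn cT [acB _] _ bigA smallB.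
have A_gt0 : 0 < #|out_nbhd beats vstar| by move: bigA; rewrite cT; have := expn_gt0 2 k; lia.
have goodT : good_field beats vstar k [set: T].
  split; rewrite ?inE ?cardsT ?setTI //; first by right.
  move=> b bB; apply: out_le_in_of_outdeg => //.
  by rewrite -(leq_pmul2r A_gt0) smallB.
have [s ps ks] := good_field_champion tourn (acyclic_on_trans tourn acB) goodT.
by exists s; split; rewrite // /is_seeding enumT -enum_setT.
Qed.
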